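(* Let $n\ge 1$, $k=\lceil\log_2 n\rceil$, and let $G=(V,E)$ be the complete graph on $V=\{1,\ldots,n\}$. For $i\in V$ let $\mathbf i=(i_1,\ldots,i_k)\in\{0,1\}^k$ be the binary digits of $i-1$, i.e. $i-1=\sum_{t=1}^k i_t2^{t-1}$, and set $a_{ij}=(-1)^{\langle\mathbf i,\mathbf j\rangle}$ where $\langle\mathbf i,\mathbf j\rangle=\sum_{t=1}^k i_tj_t$. Then $\mu^+(V)\leqslant n^{3/2}/\sqrt2$ and $\mu^-(V)\geqslant -n^{3/2}/\sqrt2$.
   Context: For disjoint $U_1,U_2\subseteq V$, $\delta(U_1,U_2)$ is the set of edges with one endpoint in $U_1$ and one in $U_2$. $\mu^+(V)=\max\{\sum_{ij\in\delta(U_1,U_2)}a_{ij}:U_1\cup U_2=V,\ U_1\cap U_2=\emptyset\}$ and $\mu^-(V)$ is the corresponding minimum. *)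

From HB Require Import structures.
From mathcomp Require Import all_boot all_order all_algebra.
Set Implicit Arguments. Unset Strict Implicit. Unset Printing Implicit Defensive.
Import Order.TTheory GRing.Theory Num.Theory.
Local Open Scope ring_scope.

(* Vertex i : 'I_n stands for the paper's vertex i+1; its binary vector
   is the binary expansion of (i+1)-1 = i, digits t = 0 .. k-1. *)

Definition kbits (n : nat) : nat := up_log 2 n.

Definition bit (i t : nat) : bool := odd (i %/ 2 ^ t).

Definition ip (k i j : nat) : nat := (\sum_(t < k) (bit i t && bit j t))%N.

Definition aw (n : nat) (i j : 'I_n) : int := (-1) ^+ ip (kbits n) i j.

Definition cutw (n : nat) (U : {set 'I_n}) : int :=
  \sum_(i in U) \sum_(j in ~: U) aw i j.

Definition mu_plus (n : nat) : int :=
  \big[Num.max/cutw (set0 : {set 'I_n})]_(U : {set 'I_n}) cutw U.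
Definition mu_minus (n : nat) : int :=
  \big[Num.min/cutw (set0 : {set 'I_n})]_(U : {set 'I_n}) cutw U.

(* The matrix H_k = ((-1)^<i,j>)_{i,j < 2^k} is the Sylvester-Hadamard
   matrix: its rows are pairwise orthogonal, by induction on k.  For a cut
   (U, W) write the weight as sum_{i in U} V_i with V_i = sum_{j in W} a_ij.
   Cauchy-Schwarz gives weight^2 <= |U| sum_{i < 2^k} V_i^2, and by
   orthogonality the last sum is |W| 2^k (Parseval).  With |U||W| <= n^2/4
   and 2^k <= 2n this is weight^2 <= n^3/2. *)

From HB Require Import structures.
From mathcomp Require Import all_boot all_order all_algebra.
From mathcomp Require Import zify.
Import Order.TTheory GRing.Theory Num.Theory.

Set Implicit Arguments.
Unset Strict Implicit.
Unset Printing Implicit Defensive.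

Local Open Scope ring_scope.

Lemma bit0 i : bit i 0 = odd i.
Proof. by rewrite /bit expn0 divn1. Qed.

Lemma bitS i t : bit i t.+1 = bit i./2 t.
Proof. by rewrite /bit expnS divnMA divn2. Qed.

Lemma ipS k i j : ip k.+1 i j = ((odd i && odd j) + ip k i./2 j./2)%N.
Proof.
rewrite /ip big_ord_recl /= !bit0; congr (_ + _)%N.
by apply: eq_bigr => t _; rewrite /bump /= !add1n !bitS.
Qed.

Definition hadamard k i j : int := (-1) ^+ ip k i j.

Lemma hadamardS k (b : bool) i j :
  hadamard k.+1 (b + i.*2) j = (-1) ^+ (b && odd j) * hadamard k i j./2.
Proof.
by rewrite /hadamard ipS oddD odd_double addbF half_bit_double oddb exprD.
Qed.

Lemma eqn_odd_half m n : (m == n) = (odd m == odd n) && (m./2 == n./2).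
Proof.
apply/eqP/andP => [-> // | [/eqP odd_mn /eqP half_mn]].
by rewrite -[m]odd_double_half odd_mn half_mn odd_double_half.
Qed.

Lemma add1_signM (a b : bool) :
  1 + (-1) ^+ a * (-1) ^+ b = (a == b)%:R *+ 2 :> int.
Proof. by case: a; case: b. Qed.

Lemma big_ord_double {V : nmodType} (F : nat -> V) m :
  \sum_(i < m.*2) F i = \sum_(i < m) (F i.*2 + F i.*2.+1).
Proof.
elim: m => [|m IH]; first by rewrite !big_ord0.
by rewrite doubleS !big_ord_recr /= IH addrA.
Qed.

Lemma hadamard_orthogonal k j j' : (j < 2 ^ k)%N -> (j' < 2 ^ k)%N ->
  \sum_(i < 2 ^ k) hadamard k i j * hadamard k i j' = (j == j')%:R * (2 ^ k)%:R.
Proof.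
elim: k j j' => [|k IH] j j'.
  rewrite expn0 => /[!ltnS] /[!leqn0] /eqP-> /eqP->.
  by rewrite big_ord1 /hadamard /ip !big_ord0 mulr1.
have half_lt l : (l < 2 ^ k.+1)%N -> (l./2 < 2 ^ k)%N.
  by rewrite -divn2 ltn_divLR // -expnSr.
move=> /half_lt lt_j /half_lt lt_j'.
(* Rows 2i and 2i+1 agree up to the sign (-1)^(odd j) in column j, so the
   pair contributes twice the level-k term when odd j = odd j', else 0. *)
rewrite expnS mul2n (big_ord_double (fun i => hadamard k.+1 i j * hadamard k.+1 i j')).
under eq_bigr => i _.
  rewrite -[i.*2]/(false + i.*2)%N -[i.*2.+1]/(true + i.*2)%N !hadamardS /= !mul1r.
  rewrite mulrACA -[X in X + _]mul1r -mulrDl add1_signM.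
  over.
rewrite -mulr_sumr IH // (eqn_odd_half j j') -mul2n natrM.
by case: (odd j == odd j'); case: (_ == _); rewrite /= ?mul0r ?mulr0 // mul1r mulr_natl.
Qed.

Lemma sqr_sum_le_card_sum_sqr (R : realDomainType) (I : finType) (A : {pred I})
    (v : I -> R) :
  (\sum_(i in A) v i) ^+ 2 <= #|A|%:R * \sum_(i in A) v i ^+ 2.
Proof.
set s := \sum_(i in A) v i; set q := \sum_(i in A) v i ^+ 2.
have pairs_eq : \sum_(i in A) \sum_(j in A) (v i - v j) ^+ 2 =
    (#|A|%:R * q - s ^+ 2) *+ 2.
  have -> : \sum_(i in A) \sum_(j in A) (v i - v j) ^+ 2 =
      \sum_(i in A) \sum_(j in A) v i ^+ 2
      - (\sum_(i in A) \sum_(j in A) v i * v j) *+ 2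
      + \sum_(i in A) \sum_(j in A) v j ^+ 2.
    rewrite -sumrMnl -sumrB -big_split; apply: eq_bigr => i _.
    by rewrite -sumrMnl -sumrB -big_split; apply: eq_bigr => j _; apply: sqrrB.
  rewrite -big_distrlr /= -expr2 -/s.
  under eq_bigr => i _ do rewrite sumr_const.
  by rewrite sumrMnl -/q sumr_const addrAC -mulr2n mulrnBl mulr_natl.
have pairs_ge0 : 0 <= \sum_(i in A) \sum_(j in A) (v i - v j) ^+ 2.
  by apply: sumr_ge0 => i _; apply: sumr_ge0 => j _; apply: sqr_ge0.
by rewrite pairs_eq pmulrn_lge0 // subr_ge0 in pairs_ge0.
Qed.

Lemma sum_sqr_hadamard_colsum k m (W : {set 'I_m}) : (m <= 2 ^ k)%N ->
  \sum_(i < 2 ^ k) (\sum_(j in W) hadamard k i j) ^+ 2 = (#|W| * 2 ^ k)%:R.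
Proof.
move=> m_le; have col_lt (j : 'I_m) : (j < 2 ^ k)%N := leq_trans (ltn_ord j) m_le.
under eq_bigr => i _ do rewrite expr2 big_distrlr /=.
rewrite exchange_big natrM mulr_natl -sumr_const; apply: eq_bigr => j jW.
rewrite exchange_big (bigD1 j) //= hadamard_orthogonal // eqxx mul1r.
rewrite big1 ?addr0 // => j' /andP[_ j'_neq_j].
by rewrite hadamard_orthogonal // eq_sym (inj_eq val_inj) (negbTE j'_neq_j) mul0r.
Qed.

Lemma cutw_sqr_le n (U : {set 'I_n}) :
  cutw U ^+ 2 <= (#|U| * (#|~: U| * 2 ^ kbits n))%:R.
Proof.
set k := kbits n; set W := ~: U.
pose V i := \sum_(j in W) hadamard k i j.
have n_le : (n <= 2 ^ k)%N by apply: up_logP.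
have sum_U_le : \sum_(i in U) V i ^+ 2 <= \sum_(i < n) V i ^+ 2.
  rewrite [leRHS](bigID (mem U)) /= lerDl.
  by apply: sumr_ge0 => i _; apply: sqr_ge0.
have sum_n_le : \sum_(i < n) V i ^+ 2 <= \sum_(i < 2 ^ k) V i ^+ 2.
  rewrite (big_ord_widen _ (fun i => V i ^+ 2) n_le).
  rewrite [leRHS](bigID (fun i : 'I_(2 ^ k) => (i < n)%N)) /= lerDl.
  by apply: sumr_ge0 => i _; apply: sqr_ge0.
have -> : cutw U = \sum_(i in U) V i by [].
rewrite natrM -(sum_sqr_hadamard_colsum W n_le).
apply: le_trans (sqr_sum_le_card_sum_sqr (mem U) (fun i : 'I_n => V i)) _.
by rewrite ler_wpM2l // (le_trans sum_U_le).
Qed.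

Lemma exp2_kbits_le_double n : (0 < n)%N -> (2 ^ kbits n <= 2 * n)%N.
Proof.
case: n => [//|[_|n _]]; first by rewrite /kbits up_log1.
have := up_log_gtn (isT : (1 < 2)%N) (isT : (1 < n.+2)%N).
have : (0 < up_log 2 n.+2)%N by rewrite up_log_gt0.
rewrite /kbits; case: (up_log 2 n.+2) => // e _ /= /ltnW.
by rewrite expnS leq_pmul2l.
Qed.

Lemma cube_ge_cut_size u w N :
  (N <= 2 * (u + w))%N -> (2 * (u * (w * N)) <= (u + w) ^ 3)%N.
Proof.
move=> N_le.
have amgm : (4 * (u * w) <= (u + w) ^ 2)%N.
  by have := (nat_Cauchy u w).1; rewrite sqrnD; lia.
have := leq_mul amgm (leqnn (u + w)); have := leq_mul (leqnn (u * w)) N_le.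
rewrite expnSr; nia.
Qed.

Lemma cutw_bound n (U : {set 'I_n}) :
  (0 < n)%N -> 2 * cutw U ^+ 2 <= (n ^ 3)%:R.
Proof.
move=> n_gt0; apply: le_trans (_ : 2 * (#|U| * (#|~: U| * 2 ^ kbits n))%:R <= _).
  by rewrite ler_pM2l // cutw_sqr_le.
have card_n : (#|U| + #|~: U|)%N = n by rewrite cardsC card_ord.
rewrite -natrM ler_nat -[in X in (_ <= X ^ 3)%N]card_n.
by apply: cube_ge_cut_size; rewrite card_n exp2_kbits_le_double.
Qed.

Lemma abs_le_sqrt_half (R : rcfType) (x y : R) :
  2 * x ^+ 2 <= y -> `|x| <= Num.sqrt (y / 2).
Proof.
move=> le_y; have y_ge0 : 0 <= y by apply: le_trans le_y; rewrite mulr_ge0 ?sqr_ge0.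
by rewrite -sqrtr_sqr ler_sqrt ?divr_ge0 // ler_pdivlMr // mulrC.
Qed.

Lemma intr_twice_sqr_le_cube (R : rcfType) n (x : int) :
  2 * x ^+ 2 <= (n ^ 3)%:R -> 2 * (x%:~R : R) ^+ 2 <= n%:R ^+ 3.
Proof. by rewrite -(ler_int R) rmorphM rmorphXn /= natrX rmorphXn /= !natz. Qed.

Theorem lemma2 (R : rcfType) (n : nat) (hn : (1 <= n)%N) :
  (mu_plus n)%:~R <= Num.sqrt ((n%:R : R) ^+ 3 / 2) /\
  - Num.sqrt ((n%:R : R) ^+ 3 / 2) <= (mu_minus n)%:~R.
Proof.
pose P (x : int) := 2 * x ^+ 2 <= (n ^ 3)%:R.
have cutP (U : {set 'I_n}) : P (cutw U) by apply: cutw_bound.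
have muP_plus : P (mu_plus n).
  by apply: (big_ind P) => [|x y Px Py|U _]; rewrite ?/Order.max ?cutP //; case: ifP.
have muP_minus : P (mu_minus n).
  by apply: (big_ind P) => [|x y Px Py|U _]; rewrite ?/Order.min ?cutP //; case: ifP.
have bound x : P x -> `|x%:~R : R| <= Num.sqrt (n%:R ^+ 3 / 2).
  by move=> /(intr_twice_sqr_le_cube R)/abs_le_sqrt_half.
split; first exact: le_trans (ler_norm _) (bound _ muP_plus).
by rewrite lerNl (le_trans _ (bound _ muP_minus)) // -normrN ler_norm.
Qed.
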